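(* Let $(S,+,\le)$ be a commutative partially ordered semigroup (addition monotone in each variable) in which every non-empty subset has an infimum and a supremum. Let $\mathcal X_0=\{0,\dots,\ell\}$ and $\mathcal X_1$ be totally ordered sets and $\mathcal X_2=\mathbb R$. Let $\Phi$ be a root system in a real vector space $V$, $\Psi=\Phi\cup\{0\}$, $\Phi^0\subseteq\dots\subseteq\Phi^\ell=\Phi$ closed subsystems, $\Psi^j=\Phi^j\cup\{0\}$, and $\lambda\in V^*$. For triply indexed vectors $\tau=(t_{vij})$, $\tau'=(t'_{vij})$ ($v\in\mathcal X_2$, $i\in\mathcal X_1$, $j\in\mathcal X_0$) define $f_\tau\colon\Psi\to S$ by $f_\tau(\alpha)=\sup\{t_{v_\alpha ij_\alpha}:i\in\mathcal X_1\}$, where $v_\alpha=\langle\alpha,\lambda\rangle$ and $j_\alpha$ is the least $j$ with $\alpha\in\Psi^j$. Then: (1) if $\tau$ is concave, $f_\tau$ is concave, i.e. $f_\tau(\sum_i a_i)\le\sum_i f_\tau(a_i)$ for every non-empty finite family $(a_i)$ in $\Psi$ with $\sum_ia_i\in\Psi$; (2) $f_{\tau\vee\tau'}\le f_\tau\bowtie f_{\tau'}$; (3) if $\tau$ is concave, $f_{\tau\vee\tau'}\le f_\tau\rtimes f_{\tau'}$; (4) if $\tau$ and $\tau'$ are concave, $f_{\tau\vee\tau'}\le f_\tau\curlyvee f_{\tau'}$.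
   Context: Operations on indexed vectors (all infima componentwise). Singly indexed vectors $\vec a\in S^{\mathcal X_0}$: $(\vec a\vee_1\vec b)_j=\inf\{a_{j_1}+b_{j_2}: j\le j_1=j_2,\text{ or } j_2\le j=j_1,\text{ or } j_1\le j_2=j\}$. Doubly indexed vectors $A=(\vec a_i)_{i\in\mathcal X_1}$: $(A\vee_2B)_i=\inf\{\vec a_{i_1}\vee_1\vec b_{i_2}: i\ge i_1=i_2,\text{ or } i_2\ge i=i_1,\text{ or } i_1\ge i_2=i\}$ (note the reversed order on $\mathcal X_1$). Triply indexed vectors $\rho=(A_v)_{v\in\mathbb R}$, $\sigma=(B_v)$: $(\rho\vee\sigma)_v=\inf\{A_{v_1}\vee_2B_{v_2}:v_1+v_2=v\}$. $\tau$ is concave if $\tau\le\tau\vee\tau$ componentwise. For functions $f,f'\colon\Psi\to S$ and $\alpha\in\Psi$ (sums ranging over elements of $\Psi$, families non-empty): $(f\bowtie f')(\alpha)=\inf_{a+a'=\alpha}f(a)+f'(a')$; $(f\rtimes f')(\alpha)=\inf_{\sum_ia_i+a'=\alpha}\sum_if(a_i)+f'(a')$; $(f\curlyvee f')(\alpha)=\inf_{\sum_ia_i+\sum_ja'_j=\alpha}\sum_if(a_i)+\sum_jf'(a'_j)$. Inequalities between functions are pointwise. *)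

From HB Require Import structures.
From mathcomp Require Import all_boot all_order all_algebra.
From mathcomp Require Import reals.
Set Implicit Arguments. Unset Strict Implicit. Unset Printing Implicit Defensive.
Import Order.TTheory GRing.Theory Num.Theory.
Local Open Scope ring_scope.

(* The inf / sup of a
   non-empty subset are given as operations (they are unique by
   antisymmetry); their value on the empty set is unconstrained. ---------- *)
Record cposg := CPOSG {
  cposg_sort :> Type;
  sadd : cposg_sort -> cposg_sort -> cposg_sort;
  sle : cposg_sort -> cposg_sort -> Prop;
  sinf : (cposg_sort -> Prop) -> cposg_sort;
  ssup : (cposg_sort -> Prop) -> cposg_sort;
  sle_refl : forall x, sle x x;
  sle_anti : forall x y, sle x y -> sle y x -> x = y;
  sle_trans : forall x y z, sle x y -> sle y z -> sle x z;
  saddA : forall x y z, sadd x (sadd y z) = sadd (sadd x y) z;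
  saddC : forall x y, sadd x y = sadd y x;
  sadd_monol : forall x y z, sle x y -> sle (sadd x z) (sadd y z);
  sadd_monor : forall x y z, sle x y -> sle (sadd z x) (sadd z y);
  sinf_lb : forall A, (exists a, A a) -> forall x, A x -> sle (sinf A) x;
  sinf_glb : forall A, (exists a, A a) ->
     forall y, (forall x, A x -> sle y x) -> sle y (sinf A);
  ssup_ub : forall A, (exists a, A a) -> forall x, A x -> sle x (ssup A);
  ssup_lub : forall A, (exists a, A a) ->
     forall y, (forall x, A x -> sle x y) -> sle (ssup A) y
}.

Definition ssum (S : cposg) (x : S) (s : seq S) : S := foldl (@sadd S) x s.

Section Vee.
Variables (S : cposg) (l : nat) (d : Order.disp_t) (I : orderType d)
          (R : realType).
Local Notation J := 'I_l.+1.

Definition vee1 (a b : J -> S) : J -> S := fun j =>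
  sinf (fun x => exists j1 j2 : J,
     [\/ (j <= j1)%N /\ j1 = j2, (j2 <= j)%N /\ j = j1 | (j1 <= j2)%N /\ j2 = j]
     /\ x = sadd (a j1) (b j2)).

(* doubly indexed vectors (note the reversed order on X_1) *)
Definition vee2 (A B : I -> J -> S) : I -> J -> S := fun i j =>
  sinf (fun x => exists i1 i2 : I,
     [\/ (i1 <= i)%O /\ i1 = i2, (i <= i2)%O /\ i = i1 | (i2 <= i1)%O /\ i2 = i]
     /\ x = vee1 (A i1) (B i2) j).

Definition vee3 (rho sigma : R -> I -> J -> S) : R -> I -> J -> S :=
  fun v i j => sinf (fun x => exists v1 v2 : R,
     v1 + v2 = v /\ x = vee2 (rho v1) (sigma v2) i j).

Definition concave3 (tau : R -> I -> J -> S) : Prop :=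
  forall v i j, sle (tau v i j) (vee3 tau tau v i j).
End Vee.

Section Roots.
Variables (R : realType) (V : vectType R).

Definition linear_form (f : V -> R) : Prop :=
  forall (c : R) (x y : V), f (c *: x + y) = c * f x + f y.

Definition root_system_on (U : {vspace V}) (Phi : seq V) : Prop :=
  0 \notin Phi /\ <<Phi>>%VS = U /\
  forall a, a \in Phi -> exists ac : V -> R,
    [/\ linear_form ac, ac a = 2 &
        forall b, b \in Phi -> b - ac b *: a \in Phi /\ ac b \is a Num.int].

Definition root_system (Phi : seq V) : Prop := root_system_on fullv Phi.

Definition closed_subsystem (Phi Phi' : seq V) : Prop :=
  [/\ {subset Phi' <= Phi}, root_system_on <<Phi'>>%VS Phi' &
      forall a b, a \in Phi' -> b \in Phi' -> a + b \in Phi -> a + b \in Phi'].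

Definition inPsi (Phi : seq V) (x : V) : bool := (x == 0) || (x \in Phi).
End Roots.

Section Ftau.
Variables (S : cposg) (R : realType) (V : vectType R) (l : nat)
          (d : Order.disp_t) (I : orderType d).
Variables (Phis : 'I_l.+1 -> seq V) (lam : V -> R).

(* j_alpha : least j with alpha in Psi^j (alpha in Psi^l = Psi is assumed) *)
Definition jidx (alpha : V) : 'I_l.+1 :=
  [arg min_(j < ord_max | inPsi (Phis j) alpha) (j : nat)]%N.

Definition ftau (tau : R -> I -> 'I_l.+1 -> S) (alpha : V) : S :=
  ssup (fun x => exists i : I, x = tau (lam alpha) i (jidx alpha)).
End Ftau.

Section FunOps.
Variables (S : cposg) (R : realType) (V : vectType R) (Phi : seq V).
Local Notation Psi := (inPsi Phi).

Definition fconcave (f : V -> S) : Prop :=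
  forall (a : V) (s : seq V), all Psi (a :: s) -> Psi (\sum_(x <- a :: s) x) ->
    sle (f (\sum_(x <- a :: s) x)) (ssum (f a) (map f s)).

Definition fbowtie (f f' : V -> S) (alpha : V) : S :=
  sinf (fun x => exists a a' : V,
     [/\ Psi a, Psi a', a + a' = alpha & x = sadd (f a) (f' a')]).

Definition frtimes (f f' : V -> S) (alpha : V) : S :=
  sinf (fun x => exists (a : V) (s : seq V) (a' : V),
     [/\ all Psi (a :: s), Psi a', \sum_(y <- a :: s) y + a' = alpha &
         x = sadd (ssum (f a) (map f s)) (f' a')]).

Definition fcurlyvee (f f' : V -> S) (alpha : V) : S :=
  sinf (fun x => exists (a : V) (s : seq V) (b : V) (t : seq V),
     [/\ all Psi (a :: s), all Psi (b :: t),
         \sum_(y <- a :: s) y + \sum_(y <- b :: t) y = alpha &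
         x = sadd (ssum (f a) (map f s)) (ssum (f' b) (map f' t))]).

Definition fle (f g : V -> S) : Prop := forall alpha, Psi alpha -> sle (f alpha) (g alpha).
End FunOps.

From HB Require Import structures.
From mathcomp Require Import all_boot all_order all_algebra.
From mathcomp Require Import reals.
From mathcomp Require Import zify ring lra.
From Stdlib Require Import ClassicalEpsilon.
Set Implicit Arguments. Unset Strict Implicit. Unset Printing Implicit Defensive.
Import Order.TTheory GRing.Theory Num.Theory.

(* Everything rests on a tie property of the index j_alpha (the least j with
   alpha in Psi^j): if beta = a_1 + ... + a_n with all a_k and beta in Psi,
   then either j_beta equals the maximum M of the j_(a_k), or j_beta < M and M
   is attained at least twice (jidx_sum_tied).  Were M attained only at a_k,
   then a_k = beta - (other terms) would lie in Psi^(M-1), because a sum of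
   elements of a closed subsystem which lies in Psi lies in the subsystem
   (closed_subsystem_sum).  The latter is the classical fact that beta - alpha
   lies in Psi when <alpha, beta^v> > 0 (root_sub_of_pos_pairing), proved with
   a reflection-invariant positive form and Cauchy--Schwarz.

   A tie is exactly what the index condition of vee_1 asks for: it splits along
   any partition of the summands (tied_max_cat), and concavity of tau then
   bounds tau at the sum by the sum of the tau at the summands
   (concave3_sum).  Part (1) is that bound; parts (2)-(4) all follow from one
   estimate of f_(tau v tau') at a sum split into two families
   (ftau_vee3_split). *)

Definition seqmax (L : seq nat) : nat := foldr maxn 0 L.

(* j is tied to the maximum M of L: j = M, or j < M and M occurs at least
   twice in L.  This is the relation between j_beta and the j_{a_k} for a
   sum beta = a_1 + ... + a_n in Psi. *)
Definition tied_max (j : nat) (L : seq nat) : bool :=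
  (j == seqmax L) || ((j < seqmax L) && (1 < count_mem (seqmax L) L)).

Definition vee1_index (j j1 j2 : nat) : bool :=
  [|| (j <= j1) && (j1 == j2), (j2 <= j) && (j == j1) | (j1 <= j2) && (j2 == j)].

Lemma seqmax_ub x L : x \in L -> x <= seqmax L.
Proof.
elim: L => [//|y L IH]; rewrite inE /= => /orP[/eqP->|/IH h]; first exact: leq_maxl.
exact: leq_trans h (leq_maxr _ _).
Qed.

Lemma seqmax_mem L : L != [::] -> seqmax L \in L.
Proof.
elim: L => [//|x L IH] _; rewrite /= -/(seqmax L) inE.
have [->|nL] := eqVneq L [::]; first by rewrite /= maxn0 eqxx.
by case: (leqP x (seqmax L)) => _; [rewrite IH ?orbT | rewrite eqxx].
Qed.

Lemma seqmax_cat A B : seqmax (A ++ B) = maxn (seqmax A) (seqmax B).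
Proof. by elim: A => [|x A IH] /=; rewrite ?max0n // IH maxnA. Qed.

Lemma count_above_seqmax L x : seqmax L < x -> count_mem x L = 0.
Proof. by move=> h; apply/count_memPn; apply/negP => /seqmax_ub; lia. Qed.

Lemma count_seqmax_gt0 L : L != [::] -> 0 < count_mem (seqmax L) L.
Proof. by move/seqmax_mem => h; rewrite lt0n; apply/eqP => /count_memPn; rewrite h. Qed.

Lemma tied_max1 j n : tied_max j [:: n] -> j = n.
Proof. by rewrite /tied_max /= maxn0 eqxx /= addn0 ltnn andbF orbF => /eqP. Qed.

Lemma tied_max_cat j A B : A != [::] -> B != [::] -> tied_max j (A ++ B) ->
  exists j1 j2, [/\ j1 \in j :: A ++ B, j2 \in j :: A ++ B, vee1_index j j1 j2,
                    tied_max j1 A & tied_max j2 B].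
Proof.
move=> nA nB.
have mA := seqmax_mem nA; have mB := seqmax_mem nB.
have cA := count_seqmax_gt0 nA; have cB := count_seqmax_gt0 nB.
rewrite /tied_max seqmax_cat count_cat.
move: mA mB cA cB; set MA := seqmax A; set MB := seqmax B => mA mB cA cB tie.
have counts : (maxn MA MB = MA /\ MA = MB /\ count_mem (maxn MA MB) A = count_mem MA A
              /\ count_mem (maxn MA MB) B = count_mem MB B) \/
         (maxn MA MB = MA /\ MB < MA /\ count_mem (maxn MA MB) B = 0
              /\ count_mem (maxn MA MB) A = count_mem MA A) \/
         (maxn MA MB = MB /\ MA < MB /\ count_mem (maxn MA MB) A = 0
              /\ count_mem (maxn MA MB) B = count_mem MB B).
  case: (ltngtP MA MB) => h.
  - by right; right; do ?split => //; apply: count_above_seqmax.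
  - by right; left; do ?split => //; apply: count_above_seqmax.
  - by left; rewrite h.
have memj : j \in j :: A ++ B by rewrite inE eqxx.
have memA : MA \in j :: A ++ B by rewrite inE mem_cat mA orbT.
have memB : MB \in j :: A ++ B by rewrite inE mem_cat mB !orbT.
have mem_jB : maxn j MB \in j :: A ++ B by case: leqP => _.
have mem_jA : maxn j MA \in j :: A ++ B by case: leqP => _.
exists (if (1 < count_mem MA A) && (maxn j MB < MA) then maxn j MB else MA).
exists (if (1 < count_mem MB B) && (maxn j MA < MB) then maxn j MA else MB).
split; [by case: ifP | by case: ifP | | |];
  move: counts cA cB tie; rewrite /vee1_index;
  move: (count_mem (maxn MA MB) A) (count_mem (maxn MA MB) B);
  move: (count_mem MA A) (count_mem MB B) (maxn MA MB) => cA' cB' M xA xB counts cA cB tie;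
  repeat case: ifP; lia.
Qed.

Local Open Scope ring_scope.

Section LinearForm.
Variables (R : realType) (V : vectType R) (f : V -> R) (hf : linear_form f).

Lemma linear_formD x y : f (x + y) = f x + f y.
Proof. by have := hf 1 x y; rewrite scale1r mul1r. Qed.

Lemma linear_form0 : f 0 = 0.
Proof. by have := linear_formD 0 0; rewrite addr0 => h; lra. Qed.

Lemma linear_formZ c x : f (c *: x) = c * f x.
Proof. by have := hf c x 0; rewrite !addr0 linear_form0 addr0. Qed.

Lemma linear_formB x y : f (x - y) = f x - f y.
Proof. by rewrite linear_formD -scaleN1r linear_formZ mulN1r. Qed.

Lemma linear_form_sum (s : seq V) : f (\sum_(x <- s) x) = \sum_(x <- s) f x.
Proof.
elim: s => [|x s IH]; first by rewrite !big_nil linear_form0.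
by rewrite !big_cons linear_formD IH.
Qed.
End LinearForm.

(* An arithmetic progression b, b + e a, b + 2e a, ... with e a != 0 is
   injective, so it cannot stay inside a finite list of vectors. *)
Lemma progression_escapes (R : realType) (V : vectType R) (s : seq V)
    (b a : V) (e : R) : a != 0 -> e != 0 -> b \in s ->
  ~ (forall k : nat, b + (k%:R * e) *: a \in s -> b + (k.+1%:R * e) *: a \in s).
Proof.
move=> a0 e0 bs step.
pose u (k : nat) := b + (k%:R * e) *: a.
have us k : u k \in s by elim: k => [|k]; [rewrite /u mul0r scale0r addr0|exact: step].
have inj_u : injective u.
  move=> k m /addrI /eqP; rewrite -subr_eq0 -scalerBl scaler_eq0 (negPf a0) orbF.
  by rewrite -mulrBl mulf_eq0 (negPf e0) orbF subr_eq0 eqr_nat => /eqP.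
have := @uniq_leq_size _ (map u (iota 0 (size s).+1)) s.
rewrite map_inj_uniq // iota_uniq size_map size_iota ltnn => /(_ isT) contra.
suff : false by [].
by apply: contra => x /mapP[k _ ->].
Qed.


Lemma sum_cauchy_schwarz (R : realFieldType) (T : Type) (r : seq T) (P Q : T -> R) :
  0 < \sum_(b <- r) Q b * Q b ->
  (\sum_(b <- r) P b * Q b) ^+ 2 <=
    (\sum_(b <- r) P b * P b) * \sum_(b <- r) Q b * Q b.
Proof.
set q := \sum_(b <- r) Q b * Q b; set p := \sum_(b <- r) P b * Q b.
set pp := \sum_(b <- r) P b * P b => q_gt0.
have expand x y : \sum_(b <- r) (x * P b - y * Q b) ^+ 2 =
                  x ^+ 2 * pp - 2 * x * y * p + y ^+ 2 * q.
  rewrite /pp /p /q !mulr_sumr -sumrB -big_split /=.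
  by apply: eq_bigr => i _; ring.
have : 0 <= \sum_(b <- r) (q * P b - p * Q b) ^+ 2.
  by apply: sumr_ge0 => i _; rewrite sqr_ge0.
by rewrite expand => h; nra.
Qed.

Lemma int_gt0_ge1 (R : archiRealDomainType) (x : R) : x \is a Num.int -> 0 < x -> 1 <= x.
Proof.
move=> /intrP[z ->]; rewrite ltr0z => z_gt0.
by rewrite (_ : 1 = 1%:~R) // ler_int; lia.
Qed.

Lemma int_product_le4 (R : archiRealDomainType) (n m : R) :
  n \is a Num.int -> m \is a Num.int -> 0 < n -> 0 < m ->
  n != 1 -> m != 1 -> n * m <= 4 -> n = 2.
Proof.
move=> n_int m_int n_gt0 m_gt0 n_ne1 m_ne1 nm_le4.
have n_ge2 : 1 <= n - 1.
  apply: int_gt0_ge1; first by rewrite rpredB ?rpred1.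
  by rewrite subr_gt0 lt_def n_ne1 /=; apply: int_gt0_ge1.
have m_ge2 : 1 <= m - 1.
  apply: int_gt0_ge1; first by rewrite rpredB ?rpred1.
  by rewrite subr_gt0 lt_def m_ne1 /=; apply: int_gt0_ge1.
nra.
Qed.

Lemma addr_scale_shift (R : realType) (V : vectType R) (x a : V) (s t : R) :
  x + s *: a - t *: a = x + (s - t) *: a.
Proof. by rewrite -addrA -scalerBl. Qed.

Lemma sum_gt0_has (R : realDomainType) (T : Type) (s : seq T) (F : T -> R) :
  0 < \sum_(x <- s) F x -> has (fun x => 0 < F x) s.
Proof.
elim: s => [|x s IH]; first by rewrite big_nil ltxx.
rewrite big_cons /=; have [//|Fx_le0 sum_gt0] := ltP 0 (F x).
by apply: IH; lra.
Qed.

Section RootSystem.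
Variables (R : realType) (V : vectType R) (Phi : seq V).
Hypothesis Phi0 : 0 \notin Phi.

Definition coroot (a : V) (c : V -> R) :=
  [/\ linear_form c, c a = 2 &
      forall b, b \in Phi -> b - c b *: a \in Phi /\ c b \is a Num.int].

(* The reflection along a sends a to -a, so roots come in opposite pairs. *)
Lemma coroot_opp_root a c : a \in Phi -> coroot a c -> - a \in Phi.
Proof.
move=> aP [_ ca hc]; have := (hc a aP).1; rewrite ca.
by rewrite -{1}[a]scale1r -scalerBl (_ : 1 - 2 = -1 :> R) ?scaleN1r //; lra.
Qed.

(* Coroots are unique on Phi: if two coroots of a differ by e != 0 at a root b,
   the composite of the two reflections translates b by e a, forever. *)
Lemma coroot_unique a c c' : a \in Phi -> coroot a c -> coroot a c' ->
  forall b, b \in Phi -> c b = c' b.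
Proof.
move=> aP [lc ca hc] [lc' ca' hc'] b bP.
apply/eqP; rewrite eq_sym -subr_eq0; apply/negPn/negP => e0.
have a0 : a != 0 by apply: contraNneq Phi0 => <-.
apply: (progression_escapes a0 e0 bP) => k.
set u := b + _ *: a => uP.
have := (hc _ (hc' _ uP).1).1.
suff -> : (u - c' u *: a) - c (u - c' u *: a) *: a =
          b + (k.+1%:R * (c' b - c b)) *: a by [].
rewrite (linear_formB lc) (linear_formZ lc) ca /u (linear_formD lc').
rewrite (linear_formZ lc') (linear_formD lc) (linear_formZ lc) ca ca'.
by rewrite !addr_scale_shift; congr (_ + _ *: _); rewrite -addn1 natrD; ring.
Qed.

Variable cor : V -> V -> R.
Hypothesis hcor : forall a, a \in Phi -> coroot a (cor a).

Definition srefl a x := x - cor a x *: a.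

Lemma srefl_root a x : a \in Phi -> x \in Phi -> srefl a x \in Phi.
Proof. by move=> aP xP; have [_ _ h] := hcor aP; exact: (h x xP).1. Qed.

Lemma srefl_linear a k x y : a \in Phi -> srefl a (k *: x + y) = k *: srefl a x + srefl a y.
Proof.
move=> aP; have [lc _ _] := hcor aP.
by rewrite /srefl lc scalerDl scalerBr scalerA opprD addrACA.
Qed.

Lemma sreflK a : a \in Phi -> involutive (srefl a).
Proof.
move=> aP x; have [lc ca _] := hcor aP.
rewrite /srefl (linear_formB lc) (linear_formZ lc) ca -addrA -opprD -scalerDl.
by rewrite (_ : cor a x + (cor a x - cor a x * 2) = 0) ?scale0r ?subr0 //; ring.
Qed.

Lemma coroot_srefl a b y : a \in Phi -> b \in Phi -> y \in Phi ->
  cor (srefl a b) y = cor b (srefl a y).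
Proof.
move=> aP bP yP; have sbP := srefl_root aP bP.
apply: (coroot_unique sbP (hcor sbP) (c' := fun y => cor b (srefl a y)) _ yP).
have [lb cbb hb] := hcor bP; split.
- by move=> k x z; rewrite srefl_linear // lb.
- by rewrite sreflK.
- move=> z zP; split; last exact: (hb _ (srefl_root aP zP)).2.
  have := srefl_root aP (hb _ (srefl_root aP zP)).1.
  by rewrite -scaleNr addrC srefl_linear // sreflK // addrC scaleNr.
Qed.

(* A reflection-invariant symmetric bilinear form, positive on roots. *)
Definition wform x y := \sum_(b <- undup Phi) cor b x * cor b y.

Lemma wformC x y : wform x y = wform y x.
Proof. by apply: eq_bigr => b _; rewrite mulrC. Qed.

Lemma wformBl x a k y : wform (x - k *: a) y = wform x y - k * wform a y.
Proof.
rewrite /wform mulr_sumr -sumrB; apply: eq_big_seq => b; rewrite mem_undup => bP.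
have [lb _ _] := hcor bP; rewrite (linear_formB lb) (linear_formZ lb); ring.
Qed.

(* Invariance: reflections permute the roots, hence the terms of the sum. *)
Lemma wform_srefl a x y : a \in Phi -> x \in Phi -> y \in Phi ->
  wform (srefl a x) (srefl a y) = wform x y.
Proof.
move=> aP xP yP; rewrite /wform.
rewrite (eq_big_seq (fun b => cor (srefl a b) x * cor (srefl a b) y)); last first.
  by move=> b; rewrite mem_undup => bP; rewrite !coroot_srefl.
rewrite -(big_map (srefl a) xpredT (fun b => cor b x * cor b y)).
apply: perm_big; apply: uniq_perm.
- by rewrite (map_inj_uniq (can_inj (sreflK aP))) undup_uniq.
- exact: undup_uniq.
move=> z; apply/mapP/idP.
- by move=> [w]; rewrite !mem_undup => wP ->; apply: srefl_root.
- rewrite mem_undup => zP; exists (srefl a z); first by rewrite mem_undup srefl_root.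
  by rewrite sreflK.
Qed.

(* Positivity on roots: the term b = a alone contributes <a, a^v>^2 = 4. *)
Lemma wform_root_ge4 a : a \in Phi -> 4 <= wform a a.
Proof.
move=> aP; rewrite /wform (bigD1_seq a) ?mem_undup ?undup_uniq //=.
have [_ -> _] := hcor aP; rewrite (_ : 4 = 2 * 2 + 0) ?lerD2l; last by ring.
by apply: sumr_ge0 => i _; rewrite -expr2 sqr_ge0.
Qed.

Lemma coroot_wform b x : b \in Phi -> x \in Phi -> cor b x * wform b b = 2 * wform x b.
Proof.
move=> bP xP; have := wform_srefl bP xP bP; have [_ cb _] := hcor bP.
by rewrite {2}/srefl cb wformC wformBl /srefl wformC wformBl wformC => h; lra.
Qed.

(* For roots b, g with <g, b^v> > 0 the product of the two pairings is a
   positive integer at most 4, by Cauchy--Schwarz for the invariant form. *)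
Lemma pairing_product_le4 b g : b \in Phi -> g \in Phi -> 0 < cor b g ->
  0 < cor g b /\ cor b g * cor g b <= 4.
Proof.
move=> bP gP n_gt0.
have Bb := wform_root_ge4 bP; have Bg := wform_root_ge4 gP.
have e1 := coroot_wform bP gP; have e2 := coroot_wform gP bP.
have cs : wform g b ^+ 2 <= wform g g * wform b b.
  by apply: sum_cauchy_schwarz; apply: lt_le_trans Bb; lra.
have Bs := wformC b g.
have m_gt0 : 0 < cor g b.
  have : 0 < cor g b * wform g g by rewrite e2 Bs -e1 mulr_gt0 //; lra.
  by rewrite pmulr_lgt0 //; lra.
split=> //.
have e3 : (cor b g * cor g b) * (wform b b * wform g g) = 4 * wform g b ^+ 2.
  have -> : (cor b g * cor g b) * (wform b b * wform g g) =
    (cor b g * wform b b) * (cor g b * wform g g) by ring.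
  by rewrite e1 e2 Bs; ring.
by rewrite -(ler_pM2r (_ : 0 < wform b b * wform g g)) ?e3; nra.
Qed.

(* If both pairings equal 2 then b = g: otherwise s_b s_g translates the
   string b + 2k (b - g) inside Phi forever. *)
Lemma pairing_two_eq b g : b \in Phi -> g \in Phi -> cor b g = 2 -> cor g b = 2 -> b = g.
Proof.
move=> bP gP n2 m2; apply/eqP; rewrite -subr_eq0; apply/negPn/negP => d0.
have [lb cbb _] := hcor bP; have [lg cgg _] := hcor gP.
have cbd : cor b (b - g) = 0 by rewrite (linear_formB lb) cbb n2 subrr.
have cgd : cor g (b - g) = 0 by rewrite (linear_formB lg) cgg m2 subrr.
have two0 : (2 : R) != 0 by apply/eqP; lra.
apply: (progression_escapes d0 two0 bP) => k uP.
have := srefl_root bP (srefl_root gP uP).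
suff -> : srefl b (srefl g (b + (k%:R * 2) *: (b - g))) =
          b + (k.+1%:R * 2) *: (b - g) by [].
rewrite /srefl (linear_formD lg) (linear_formZ lg) cgd m2 mulr0 addr0.
rewrite (linear_formB lb) (linear_formD lb) !(linear_formZ lb) cbd n2 mulr0 addr0 cbb.
rewrite (_ : 2 - 2 * 2 = - 2 :> R); last by ring.
rewrite scaleNr opprK -addrA [- _ + _]addrC -scalerBr -addrA -scalerDl.
by congr (_ + _ *: _); rewrite -addn1 natrD; ring.
Qed.
Lemma root_sub_of_pos_pairing b g : b \in Phi -> g \in Phi -> 0 < cor b g ->
  inPsi Phi (b - g).
Proof.
move=> bP gP n_gt0.
have [m_gt0 nm_le4] := pairing_product_le4 bP gP n_gt0.
have [_ _ hb] := hcor bP; have [_ _ hg] := hcor gP.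
have [n1|n_ne1] := eqVneq (cor b g) 1.
  have := (hb g gP).1; rewrite n1 scale1r => gbP.
  by rewrite /inPsi -opprB (coroot_opp_root gbP (hcor gbP)) orbT.
have [m1|m_ne1] := eqVneq (cor g b) 1.
  by have := (hg b bP).1; rewrite m1 scale1r /inPsi => ->; rewrite orbT.
have n2 := int_product_le4 (hb g gP).2 (hg b bP).2 n_gt0 m_gt0 n_ne1 m_ne1 nm_le4.
have m2 : cor g b = 2.
  by apply: int_product_le4 (hg b bP).2 (hb g gP).2 m_gt0 n_gt0 m_ne1 n_ne1 _; rewrite mulrC.
by rewrite (pairing_two_eq bP gP n2 m2) subrr /inPsi eqxx.
Qed.

Section ClosedSubsystem.
Variable Phi' : seq V.
Hypothesis sub' : {subset Phi' <= Phi}.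
Hypothesis closed' :
  forall a b, a \in Phi' -> b \in Phi' -> a + b \in Phi -> a + b \in Phi'.

(* By
   induction on the number of terms: the sum beta pairs positively with some
   term x, so beta - x, the sum of the other terms, is in Psi, hence in Psi';
   then beta = x + (beta - x) is in Psi' by closedness. *)
Lemma closed_subsystem_sum s : all (inPsi Phi') s -> inPsi Phi (\sum_(x <- s) x) ->
  inPsi Phi' (\sum_(x <- s) x).
Proof.
elim: {s}(size s).+1 {-2}s (ltnSn (size s)) => // n IH s size_s all_s.
have [->|beta0] := eqVneq (\sum_(x <- s) x) 0; first by rewrite /inPsi eqxx.
rewrite /inPsi (negPf beta0) /= => betaP.
set beta := \sum_(x <- s) x in beta0 betaP *.
have [lb cbb _] := hcor betaP.
have : 0 < \sum_(x <- s) cor beta x.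
  by rewrite -(linear_form_sum lb s) -/beta cbb; lra.
move=> /sum_gt0_has /hasP[x xs cx_gt0].
have x0 : x != 0 by apply: contraTneq cx_gt0 => ->; rewrite (linear_form0 lb) ltxx.
have xP' : x \in Phi' by have := allP all_s x xs; rewrite /inPsi (negPf x0).
have beta_split : beta = x + \sum_(y <- rem x s) y.
  by rewrite /beta (perm_big _ (perm_to_rem xs)) big_cons.
have rest_sum : beta - x = \sum_(y <- rem x s) y by rewrite beta_split addrC addKr.
have : inPsi Phi' (\sum_(y <- rem x s) y).
  apply: IH; first by rewrite size_rem // -ltnS prednK //; case: (s) xs.
    by apply/allP => y /mem_rem /(allP all_s).
  by rewrite -rest_sum; apply: root_sub_of_pos_pairing => //; exact: sub'.
rewrite /inPsi => /orP[/eqP rest0|restP'].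
  by move: betaP; rewrite beta_split rest0 addr0.
by rewrite beta_split; apply: closed' => //; rewrite -beta_split.
Qed.
End ClosedSubsystem.
End RootSystem.

Section Semigroup.
Variable S : cposg.

Lemma sadd_mono (a b c e : S) : sle a b -> sle c e -> sle (sadd a c) (sadd b e).
Proof. by move=> h1 h2; apply: sle_trans (sadd_monol c h1) _; exact: sadd_monor. Qed.

Lemma ssum_cons (x y : S) (s : seq S) : sadd x (ssum y s) = ssum x (y :: s).
Proof. by rewrite /ssum /=; elim: s y => [|z s IH] y //=; rewrite IH saddA. Qed.

Lemma ssum_mono (X : Type) (F G : X -> S) (a : X) (s : seq X) :
  (forall x, sle (F x) (G x)) -> sle (ssum (F a) (map F s)) (ssum (G a) (map G s)).
Proof.
move=> FG; elim: s a => [|b s IH] a; first exact: FG.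
by rewrite !map_cons -!ssum_cons; apply: sadd_mono.
Qed.
End Semigroup.

Lemma ord_of_val_mem (n : nat) (j : 'I_n) (A B : seq 'I_n) (k : nat) :
  k \in val j :: map val A ++ map val B -> exists o : 'I_n, k = o.
Proof.
by rewrite inE mem_cat => /or3P[/eqP->|/mapP[o _ ->]|/mapP[o _ ->]]; eexists.
Qed.

Section VeeBounds.
Variables (S : cposg) (l : nat) (d : Order.disp_t) (I : orderType d) (R : realType).
Local Notation J := 'I_l.+1.

(* Choosing v1 + v2 = v, i1 = i2 = i and indices (j, j1, j2) satisfying the
   index condition of vee_1 in the three infima that define vee3. *)
Lemma vee3_le_sadd (rho sigma : R -> I -> J -> S) v1 v2 i (j j1 j2 : J) :
  vee1_index j j1 j2 ->
  sle (vee3 rho sigma (v1 + v2) i j) (sadd (rho v1 i j1) (sigma v2 i j2)).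
Proof.
move=> idx.
apply: (@sle_trans _ _ (vee2 (rho v1) (sigma v2) i j)).
  by apply: sinf_lb; [eexists|]; exists v1, v2.
apply: (@sle_trans _ _ (vee1 (rho v1 i) (sigma v2 i) j)).
  by apply: sinf_lb; [eexists|]; exists i, i; split => //; apply: Or31.
have cond : [\/ (j <= j1)%N /\ j1 = j2, (j2 <= j)%N /\ j = j1 | (j1 <= j2)%N /\ j2 = j].
  by case/or3P: idx => /andP[le_idx /eqP/val_inj eq_idx]; [apply: Or31|apply: Or32|apply: Or33]; split.
by apply: sinf_lb; [eexists|]; exists j1, j2.
Qed.

(* Concavity is only needed for two or more terms. *)
Lemma concave3_sum (X : Type) (F : X -> R) (Jf : X -> J) (tau : R -> I -> J -> S)
    (a : X) (s : seq X) (j : J) (i : I) :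
  (~~ nilp s -> concave3 tau) -> tied_max j (map val (map Jf (a :: s))) ->
  sle (tau (\sum_(x <- a :: s) F x) i j)
      (ssum (tau (F a) i (Jf a)) (map (fun x => tau (F x) i (Jf x)) s)).
Proof.
elim: s a j => [|b s IH] a j hc tie.
  by rewrite (val_inj (tied_max1 tie)) big_seq1; apply: sle_refl.
have [j1 [j2 [m1 m2 idx tie1 tie2]]] :=
  tied_max_cat (A := [:: val (Jf a)]) (B := map val (map Jf (b :: s))) isT isT tie.
have [k1 ek1] := ord_of_val_mem (A := [:: Jf a]) (B := map Jf (b :: s)) m1.
have [k2 ek2] := ord_of_val_mem (A := [:: Jf a]) (B := map Jf (b :: s)) m2.
subst j1 j2; have ek := val_inj (tied_max1 tie1); subst k1.
rewrite big_cons -ssum_cons.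
apply: sle_trans (hc isT _ _ _) _.
apply: sle_trans (vee3_le_sadd _ _ _ _ _ idx) _.
by apply: sadd_mono; [exact: sle_refl | apply: IH => // _; exact: hc].
Qed.
End VeeBounds.

Section IndexOfRoot.
Variables (R : realType) (V : vectType R) (Phi : seq V) (l : nat)
  (Phis : 'I_l.+1 -> seq V).
Hypothesis Phi0 : 0 \notin Phi.
Variable cor : V -> V -> R.
Hypothesis hcor : forall a, a \in Phi -> coroot Phi a (cor a).
Hypothesis hsub : forall j, closed_subsystem Phi (Phis j).
Hypothesis hmono : forall j k : 'I_l.+1, (j <= k)%N -> {subset Phis j <= Phis k}.
Hypothesis htop : Phis ord_max =i Phi.

Local Notation jx := (jidx Phis).
Local Notation Psi := (inPsi Phi).
Local Notation jlist s := (map val (map jx s)).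

Lemma jidx_spec x : Psi x ->
  inPsi (Phis (jx x)) x /\ forall k, inPsi (Phis k) x -> (jx x <= k)%N.
Proof.
move=> xP; have P0 : inPsi (Phis ord_max) x by rewrite /inPsi htop.
by rewrite /jidx; case: (@arg_minnP _ ord_max (fun j => inPsi (Phis j) x) val P0).
Qed.

Lemma jidx_mem x : Psi x -> inPsi (Phis (jx x)) x.
Proof. by case/jidx_spec. Qed.

Lemma jidx_min x k : Psi x -> inPsi (Phis k) x -> (jx x <= k)%N.
Proof. by case/jidx_spec => _; apply. Qed.

Lemma inPsi_subsystem_mono (j k : 'I_l.+1) x :
  (j <= k)%N -> inPsi (Phis j) x -> inPsi (Phis k) x.
Proof. by move=> jk; rewrite /inPsi => /orP[->//|/(hmono jk) ->]; rewrite orbT. Qed.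

Lemma inPsi_subsystem_opp j x : inPsi (Phis j) x -> inPsi (Phis j) (- x).
Proof.
rewrite /inPsi => /orP[/eqP->|xP]; first by rewrite oppr0 eqxx.
have [_ [_ [_ hroots]] _] := hsub j; have [c hc] := hroots x xP.
by rewrite (coroot_opp_root xP hc) orbT.
Qed.

Lemma subsystem_sum (k : 'I_l.+1) (s : seq V) : all (inPsi (Phis k)) s ->
  Psi (\sum_(x <- s) x) -> inPsi (Phis k) (\sum_(x <- s) x).
Proof. by have [hs _ hcl] := hsub k; exact: (closed_subsystem_sum Phi0 hcor hs hcl). Qed.

Lemma jidx_sum_le (L : seq V) : L != [::] -> all Psi L ->
  Psi (\sum_(x <- L) x) -> (jx (\sum_(x <- L) x) <= seqmax (jlist L))%N.
Proof.
move=> nL allL sumP.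
have /(ord_of_val_mem (j := ord0) (B := [::])) [kT eT] : seqmax (jlist L) \in
    val (@ord0 l) :: jlist L ++ [::].
  by rewrite cats0 inE seqmax_mem ?orbT //; case: (L) nL.
rewrite eT; apply: jidx_min => //; apply: subsystem_sum => //.
apply/allP => x xL; apply: (@inPsi_subsystem_mono (jx x)); last exact/jidx_mem/(allP allL).
by rewrite -eT; exact: seqmax_ub (map_f val (map_f jx xL)).
Qed.

(* If j_beta lies strictly below the largest index T, then T occurs twice:
   were x the only term of index T, then x = beta - (other terms) would be
   a sum of elements of Psi^(T-1). *)
Lemma jidx_sum_tie (L : seq V) : all Psi L -> Psi (\sum_(x <- L) x) ->
  (jx (\sum_(x <- L) x) < seqmax (jlist L))%N ->
  (1 < count_mem (seqmax (jlist L)) (jlist L))%N.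
Proof.
move=> allL sumP lt_T; rewrite ltnNge; apply/negP => once.
have nL : jlist L != [::] by apply: contraTneq lt_T => ->.
set T := seqmax (jlist L) in lt_T once.
have /mapP[o /mapP[x xL ->] eT] := seqmax_mem nL; rewrite -/T in eT.
have rest_lt y : y \in rem x L -> (jx y < T)%N.
  move=> yr; have := seqmax_ub (map_f val (map_f jx (mem_rem yr))).
  rewrite -/T leq_eqVlt => /orP[/eqP ey|//]; exfalso; move: once.
  rewrite (permP (perm_map val (perm_map jx (perm_to_rem xL)))) /= -eT eqxx.
  rewrite add1n ltnS leqNgt -has_count => /hasPn/(_ _ (map_f val (map_f jx yr))) /=.
  by rewrite ey eqxx.
have T_gt0 : (0 < T)%N by apply: leq_ltn_trans lt_T.
have Tb : (T.-1 < l.+1)%N by rewrite eT (leq_ltn_trans (leq_pred _) (ltn_ord _)).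
pose km := Ordinal Tb.
have le_km y : (jx y < T)%N -> (jx y <= km)%N by move=> h /=; rewrite -ltnS prednK.
have restP : all (inPsi (Phis km)) (\sum_(z <- L) z :: map -%R (rem x L)).
  rewrite /= (inPsi_subsystem_mono (le_km _ lt_T) (jidx_mem sumP)) /=.
  apply/allP => z /mapP[y yr ->]; apply: inPsi_subsystem_opp.
  apply: inPsi_subsystem_mono (le_km _ (rest_lt y yr)) _.
  exact/jidx_mem/(allP allL)/(mem_rem yr).
have sumE : \sum_(z <- \sum_(z <- L) z :: map -%R (rem x L)) z = x.
  by rewrite big_cons big_map sumrN (perm_big _ (perm_to_rem xL)) big_cons addrK.
have xP : Psi x := allP allL x xL.
have := subsystem_sum restP; rewrite sumE => /(_ xP) x_km.
by have := jidx_min xP x_km; rewrite /= -eT -ltnS prednK // ltnn.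
Qed.

Lemma jidx_sum_tied (a : V) (s : seq V) : all Psi (a :: s) ->
  Psi (\sum_(x <- a :: s) x) -> tied_max (jx (\sum_(x <- a :: s) x)) (jlist (a :: s)).
Proof.
move=> allL sumP; rewrite /tied_max.
have := jidx_sum_le (L := a :: s) isT allL sumP; rewrite leq_eqVlt => /orP[->//|lt_T].
by rewrite lt_T (jidx_sum_tie allL sumP lt_T) orbT.
Qed.
End IndexOfRoot.

Section FTau.
Variables (S : cposg) (l : nat) (d : Order.disp_t) (I : orderType d)
  (hI : inhabited I) (R : realType) (V : vectType R)
  (Phi : seq V) (Phis : 'I_l.+1 -> seq V) (lam : V -> R).
Hypothesis Phi0 : 0 \notin Phi.
Variable cor : V -> V -> R.
Hypothesis hcor : forall a, a \in Phi -> coroot Phi a (cor a).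
Hypothesis hsub : forall j, closed_subsystem Phi (Phis j).
Hypothesis hmono : forall j k : 'I_l.+1, (j <= k)%N -> {subset Phis j <= Phis k}.
Hypothesis htop : Phis ord_max =i Phi.
Hypothesis hlam : linear_form lam.

Local Notation jx := (jidx Phis).
Local Notation Psi := (inPsi Phi).
Local Notation ft := (ftau Phis lam).

Lemma ftau_ub (tau : R -> I -> 'I_l.+1 -> S) x i :
  sle (tau (lam x) i (jx x)) (ft tau x).
Proof. by apply: ssup_ub; [exists (tau (lam x) i (jx x)); exists i|exists i]. Qed.

Lemma ftau_le (tau : R -> I -> 'I_l.+1 -> S) x y :
  (forall i, sle (tau (lam x) i (jx x)) y) -> sle (ft tau x) y.
Proof.
move=> h; apply: ssup_lub; last by move=> z [i ->]; exact: h.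
by case: hI => i; exists (tau (lam x) i (jx x)); exists i.
Qed.

(* Split the tie of j_beta between the two
   families, bound vee3 by one choice of indices, and apply iterated concavity
   on each family; concavity is needed only for families of two or more terms. *)
Lemma ftau_vee3_split (tau tau' : R -> I -> 'I_l.+1 -> S) a s b t :
  (~~ nilp s -> concave3 tau) -> (~~ nilp t -> concave3 tau') ->
  all Psi (a :: s) -> all Psi (b :: t) ->
  Psi (\sum_(x <- a :: s) x + \sum_(x <- b :: t) x) ->
  sle (ft (vee3 tau tau') (\sum_(x <- a :: s) x + \sum_(x <- b :: t) x))
      (sadd (ssum (ft tau a) (map (ft tau) s)) (ssum (ft tau' b) (map (ft tau') t))).
Proof.
move=> hc hc' allA allB sumP; apply: ftau_le => i.
have tie : tied_max (jx (\sum_(x <- a :: s) x + \sum_(x <- b :: t) x))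
                    (map val (map jx (a :: s)) ++ map val (map jx (b :: t))).
  have := jidx_sum_tied Phi0 hcor hsub hmono htop (a := a) (s := s ++ b :: t).
  by rewrite -cat_cons all_cat big_cat !map_cat allA allB => /(_ isT sumP).
have [j1 [j2 [m1 m2 idx tieA tieB]]] :=
  tied_max_cat (A := map val (map jx (a :: s))) (B := map val (map jx (b :: t))) isT isT tie.
have [k1 ek1] := ord_of_val_mem (A := map jx (a :: s)) (B := map jx (b :: t)) m1.
have [k2 ek2] := ord_of_val_mem (A := map jx (a :: s)) (B := map jx (b :: t)) m2.
subst j1 j2.
rewrite (linear_formD hlam) !(linear_form_sum hlam).
apply: sle_trans (vee3_le_sadd _ _ _ _ _ idx) _.
apply: sadd_mono.
  apply: sle_trans (concave3_sum lam i hc tieA) _.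
  by apply: ssum_mono => x; exact: ftau_ub.
apply: sle_trans (concave3_sum lam i hc' tieB) _.
by apply: ssum_mono => x; exact: ftau_ub.
Qed.

Lemma ftau_concave (tau : R -> I -> 'I_l.+1 -> S) :
  concave3 tau -> fconcave Phi (ft tau).
Proof.
move=> hc a s allA sumP; apply: ftau_le => i; rewrite (linear_form_sum hlam).
have tie := jidx_sum_tied Phi0 hcor hsub hmono htop allA sumP.
apply: sle_trans (concave3_sum lam i (fun=> hc) tie) _.
by apply: ssum_mono => x; exact: ftau_ub.
Qed.

Lemma ftau_vee3_le_bowtie (tau tau' : R -> I -> 'I_l.+1 -> S) :
  fle Phi (ft (vee3 tau tau')) (fbowtie Phi (ft tau) (ft tau')).
Proof.
move=> al alP; apply: sinf_glb.
  exists (sadd (ft tau al) (ft tau' 0)), al, 0.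
  by split=> //; [rewrite /inPsi eqxx | rewrite addr0].
move=> _ [a [a' [aP a'P e ->]]]; subst al.
have := @ftau_vee3_split tau tau' a [::] a' [::]; rewrite !big_seq1.
by apply=> //=; rewrite ?aP ?a'P.
Qed.

Lemma ftau_vee3_le_rtimes (tau tau' : R -> I -> 'I_l.+1 -> S) : concave3 tau ->
  fle Phi (ft (vee3 tau tau')) (frtimes Phi (ft tau) (ft tau')).
Proof.
move=> hc al alP; apply: sinf_glb.
  exists (sadd (ssum (ft tau al) [::]) (ft tau' 0)), al, [::], 0.
  by split=> //; [rewrite /= alP | rewrite /inPsi eqxx | rewrite big_seq1 addr0].
move=> _ [a [s [a' [allA a'P e ->]]]]; subst al.
have := @ftau_vee3_split tau tau' a s a' [::]; rewrite big_seq1.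
by apply=> //=; rewrite a'P.
Qed.

Lemma ftau_vee3_le_curlyvee (tau tau' : R -> I -> 'I_l.+1 -> S) :
  concave3 tau -> concave3 tau' ->
  fle Phi (ft (vee3 tau tau')) (fcurlyvee Phi (ft tau) (ft tau')).
Proof.
move=> hc hc' al alP; apply: sinf_glb.
  exists (sadd (ssum (ft tau al) [::]) (ssum (ft tau' 0) [::])), al, [::], 0, [::].
  by split=> //; [rewrite /= alP | rewrite /= /inPsi eqxx | rewrite !big_seq1 addr0].
move=> _ [a [s [b [t [allA allB e ->]]]]]; subst al.
exact: ftau_vee3_split.
Qed.
End FTau.

Lemma root_system_coroots (R : realType) (V : vectType R) (Phi : seq V) :
  root_system Phi -> exists cor : V -> V -> R, forall a, a \in Phi -> coroot Phi a (cor a).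
Proof.
move=> [_ [_ hroots]].
have hex a : exists c : V -> R, a \in Phi -> coroot Phi a c.
  case: (boolP (a \in Phi)) => aP; last by exists (fun=> 0).
  by have [c hc] := hroots a aP; exists c.
exists (fun a => proj1_sig (constructive_indefinite_description _ (hex a))).
by move=> a; exact: (proj2_sig (constructive_indefinite_description _ (hex a))).
Qed.

Unset Implicit Arguments.

Theorem lemmaB7 (S : cposg) (l : nat) (d : Order.disp_t) (I : orderType d)
  (hI : inhabited I) (R : realType) (V : vectType R)
  (Phi : seq V) (Phis : 'I_l.+1 -> seq V) (lam : V -> R)
  (hPhi : root_system Phi)
  (hsub : forall j, closed_subsystem Phi (Phis j))
  (hmono : forall j k : 'I_l.+1, (j <= k)%N -> {subset Phis j <= Phis k})
  (htop : Phis ord_max =i Phi)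
  (hlam : linear_form lam)
  (tau tau' : R -> I -> 'I_l.+1 -> S) :
  let f := ftau Phis lam tau in
  let f' := ftau Phis lam tau' in
  let g := ftau Phis lam (vee3 tau tau') in
  [/\ concave3 tau -> fconcave Phi f,
      fle Phi g (fbowtie Phi f f'),
      concave3 tau -> fle Phi g (frtimes Phi f f') &
      concave3 tau -> concave3 tau' -> fle Phi g (fcurlyvee Phi f f')].
Proof.
move=> f f' g.
have Phi0 : 0 \notin Phi := hPhi.1.
have [cor hcor] := root_system_coroots hPhi.
split.
- exact: (ftau_concave hI Phi0 hcor hsub hmono htop hlam).
- exact: (ftau_vee3_le_bowtie hI Phi0 hcor hsub hmono htop hlam).
- exact: (ftau_vee3_le_rtimes hI Phi0 hcor hsub hmono htop hlam).
- exact: (ftau_vee3_le_curlyvee hI Phi0 hcor hsub hmono htop hlam).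
Qed.
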